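(* Let $A\xrightarrow{\phi}B\to C\to D$ be an exact sequence of finitely generated $\mathbb Z$-modules, and let $Q$ be the cokernel of the map $\phi_{\mathrm{free}}:A_{\mathrm{free}}\to B_{\mathrm{free}}$ induced by $\phi$. Then \[ |C_{\mathrm{tors}}|\le |Q_{\mathrm{tors}}|\cdot|B_{\mathrm{tors}}|\cdot|D_{\mathrm{tors}}|. \]
   Context: For a finitely generated $\mathbb Z$-module $M$, $M_{\mathrm{tors}}$ is its torsion submodule and $M_{\mathrm{free}}=M/M_{\mathrm{tors}}$. *)

From HB Require Import structures.
From mathcomp Require Export all_boot all_order all_algebra.
From mathcomp Require Export boolp classical_sets cardinality.
From mathcomp Require Import finmap.
Set Implicit Arguments. Unset Strict Implicit. Unset Printing Implicit Defensive.
Import Order.TTheory GRing.Theory Num.Theory.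
Local Open Scope ring_scope.
Local Open Scope classical_set_scope.

Definition fingen (M : zmodType) : Prop :=
  exists s : seq M, forall x : M, exists c : seq int,
    size c = size s /\ x = \sum_(i < size s) s`_i *~ c`_i.

Definition is_torsion (M : zmodType) (x : M) : Prop :=
  exists n : nat, (0 < n)%N /\ x *+ n = 0.

Definition tors (M : zmodType) : set M := fun x : M => is_torsion x.

(* |M_tors| (finite for finitely generated M) *)
Definition ntors (M : zmodType) : nat := (#|` fset_set (@tors M) |)%fset.

(* p : M -> Mf exhibits Mf as M_free = M / M_tors *)
Definition free_quotient (M Mf : zmodType) (p : {additive M -> Mf}) : Prop :=
  (forall y : Mf, exists x : M, p x = y) /\ (forall x : M, p x = 0 <-> is_torsion x).

Definition exact_at (U V W : zmodType) (f : U -> V) (g : V -> W) : Prop :=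
  forall v : V, g v = 0 <-> exists u : U, f u = v.

Definition cokernel_of (X Y Q : zmodType) (h : X -> Y) (q : {additive Y -> Q}) : Prop :=
  (forall z : Q, exists y : Y, q y = z) /\ (forall y : Y, q y = 0 <-> exists x : X, h x = y).

From mathcomp Require Import all_boot all_order all_algebra.
From mathcomp Require Import boolp classical_sets cardinality finmap.
Import GRing.Theory Num.Theory.

Set Implicit Arguments.
Unset Strict Implicit.
Unset Printing Implicit Defensive.
Local Open Scope ring_scope.
Local Open Scope classical_set_scope.

(* Counting: if f (x) = f (x') forces x - x' into K, then x |-> (f x, x - r (f x)),
   for r a section of f, embeds X into Y * K, so |X| <= |Y| |K|.  Put
   I = C_tors /\ im g.  Applied to h on C_tors this gives |C_tors| <= |D_tors| |I|,
   as the differences lie in C_tors /\ ker h = I.  Applied to the map I -> Q_tors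
   induced by q o pB, whose fibers differ by elements of g (B_tors), it gives
   |I| <= |Q_tors| |B_tors|. *)

Lemma card_fsetM (K K' : choiceType) (A : {fset K}) (E : {fset K'}) :
  (#|` A `*` E| = #|` A| * #|` E|)%fset%N.
Proof.
rewrite /fsetM (perm_size (enum_imfset2 _ _)); last by move=> [a b] [c d] _ _ [-> ->].
by rewrite size_allpairs_dep sumnE big_map big_const_seq count_predT iter_addn_0 mulnC.
Qed.

Lemma card_fset_set_image (T U : choiceType) (f : T -> U) (X : set T) :
  finite_set X -> (#|` fset_set (f @` X)| <= #|` fset_set X|)%fset%N.
Proof. by move=> fX; rewrite fset_set_image //; exact: leq_imfset_card. Qed.

Lemma fibers_subr_card (M : zmodType) (N : choiceType) (f : M -> N)
    (X K : set M) (Y : set N) :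
  finite_set Y -> finite_set K -> f @` X `<=` Y ->
  (forall x x', X x -> X x' -> f x = f x' -> K (x - x')) ->
  finite_set X /\ (#|` fset_set X| <= #|` fset_set Y| * #|` fset_set K|)%N.
Proof.
move=> fY fK fXY XK.
pose r y := xget 0 [set x | X x /\ f x = y].
have rP x : X x -> X (r (f x)) /\ f (r (f x)) = f x.
  by move=> Xx; exact: (@xgetI _ 0 [set x' | X x' /\ f x' = f x] x).
pose k x := (f x, x - r (f x)).
have kinj : {in X &, injective k}.
  by move=> x x' _ _ [fxx']; rewrite fxx' => /addIr.
have kXYK : k @` X `<=` Y `*` K.
  move=> _ [x Xx <-]; split; first by apply: fXY; exists x.
  by have [Xr fr] := rP x Xx; apply: XK; rewrite ?fr.
have fkX : finite_set (k @` X) := sub_finite_set kXYK (finite_setX fY fK).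
have fX : finite_set X.
  apply: card_le_finite fkX.
  by have := card_esym (inj_card_eq kinj); rewrite card_eq_le => /andP[].
split=> //; rewrite -card_fsetM -fset_setX //.
have -> : #|` fset_set X| = #|` fset_set (k @` X)|.
  rewrite fset_set_image // card_in_imfset // => x y.
  by rewrite /= !in_fset_set // => Xx Xy; exact: kinj.
by apply: fsubset_leq_card; rewrite -fset_set_sub //; exact: finite_setX.
Qed.

Lemma is_torsionB (M : zmodType) (x y : M) :
  is_torsion x -> is_torsion y -> is_torsion (x - y).
Proof.
move=> [n [n0 xn]] [m [m0 ym]]; exists (n * m)%N; split; first by rewrite muln_gt0 n0.
by rewrite mulrnBl mulrnA xn mul0rn mulnC mulrnA ym mul0rn subr0.
Qed.

Lemma is_torsion_raddf (M N : zmodType) (F : {additive M -> N}) (x : M) :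
  is_torsion x -> is_torsion (F x).
Proof. by move=> [n [n0 xn]]; exists n; split=> //; rewrite -raddfMn xn raddf0. Qed.

Fixpoint zspan {M : zmodType} (s : seq M) : set M :=
  if s is t :: s' then [set x | exists k : int, exists2 y : M, zspan s' y & x = t *~ k + y]
  else [set 0].

Section ZSpan.
Variable M : zmodType.
Implicit Types (s : seq M) (x y : M).

Lemma zspanD s x y : zspan s x -> zspan s y -> zspan s (x + y).
Proof.
elim: s x y => [|t s IH] x y /=; first by move=> -> ->; rewrite addr0.
move=> [k [x' sx' ->]] [l [y' sy' ->]]; exists (k + l), (x' + y'); first exact: IH.
by rewrite mulrzDr addrACA.
Qed.

Lemma zspanZ s x (z : int) : zspan s x -> zspan s (x *~ z).
Proof.
elim: s x => [|t s IH] x /=; first by move=> ->; rewrite mul0rz.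
move=> [k [x' sx' ->]]; exists (k * z), (x' *~ z); first exact: IH.
by rewrite mulrzDl mulrzA.
Qed.

Lemma zspanN s x : zspan s x -> zspan s (- x).
Proof. by move=> /(@zspanZ s x (-1)); rewrite mulrN1z. Qed.

Lemma zspanB s x y : zspan s x -> zspan s y -> zspan s (x - y).
Proof. by move=> sx /zspanN; exact: zspanD. Qed.

Lemma zspan_sum s (c : seq int) : size c = size s ->
  zspan s (\sum_(i < size s) s`_i *~ c`_i).
Proof.
elim: s c => [|t s IH] [|c0 c] //=; first by rewrite big_ord0.
move=> [sc]; rewrite big_ord_recl.
by exists c0, (\sum_(i < size s) s`_i *~ c`_i); first exact: IH.
Qed.

(* Induction on s: if some nonzero multiple m t lies in zspan s, a torsion element
   of zspan (t :: s) is determined, up to zspan s /\ M_tors, by its t-coefficient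
   mod m; otherwise its t-coefficient vanishes. *)
Lemma finite_zspan_tors s : finite_set (zspan s `&` @tors M).
Proof.
elim: s => [|t s IH] /=; first by apply: sub_finite_set (finite_set1 0) => x [].
have [[m [m0 stm]]|no_mult] := pselect (exists m : int, m != 0 /\ zspan s (t *~ m)).
- pose coefs x := [set k : int | exists2 y, zspan s y & x = t *~ k + y].
  pose coef x := xget 0 (coefs x).
  have coefP x : (exists k, coefs x k) -> exists2 y, zspan s y & x = t *~ coef x + y.
    by move=> [k xk]; exact: (@xgetI _ 0 (coefs x) k).
  pose f x := absz (coef x %% m)%Z.
  have fE x : (f x)%:Z = (coef x %% m)%Z by rewrite /f gez0_abs // modz_ge0.
  apply: (proj1 (@fibers_subr_card _ _ f _ _ `I_(absz m) (finite_II _) IH _ _)).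
    by move=> _ [x _ <-]; rewrite /= -ltz_nat fE ltz_mod.
  move=> x x' [/coefP[y sy Ex] Tx] [/coefP[y' sy' Ex'] Tx'] fxx'.
  split; last exact: is_torsionB.
  have coef_mod : (coef x %% m)%Z = (coef x' %% m)%Z by rewrite -!fE fxx'.
  rewrite Ex Ex' opprD addrACA -mulrzBr [coef x](divz_eq _ m) [coef x'](divz_eq _ m).
  rewrite coef_mod opprD addrACA subrr addr0 -mulrBl mulrC mulrzA.
  by apply: zspanD; [exact: zspanZ | exact: zspanB].
- apply: sub_finite_set IH => x [[k [y sy ->]] [n [n0 tn]]].
  have k0 : k = 0.
    apply: (contra_notP _ no_mult) => /eqP kN0; exists (k * n%:Z).
    split; first by rewrite mulf_neq0 // eqz_nat -lt0n.
    have -> : t *~ (k * n%:Z) = - (y *+ n).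
      by apply/eqP; rewrite mulrzA -pmulrn -addr_eq0 -mulrnDl tn.
    by apply: zspanN; rewrite pmulrn; exact: zspanZ.
  by split; [rewrite k0 mulr0z add0r | exists n].
Qed.

Lemma fingen_finite_tors : fingen M -> finite_set (@tors M).
Proof.
move=> [s gen]; apply: sub_finite_set (finite_zspan_tors s) => x Tx; split=> //.
by have [c [sc ->]] := gen x; exact: zspan_sum.
Qed.

End ZSpan.

Lemma fingen_surj (M N : zmodType) (F : {additive M -> N}) :
  (forall y, exists x, F x = y) -> fingen M -> fingen N.
Proof.
move=> Fsurj [s gen]; exists (map F s) => y.
have [x <-] := Fsurj y; have [c [sc ->]] := gen x.
exists c; rewrite size_map; split=> //.
by rewrite raddf_sum; apply: eq_bigr => i _; rewrite raddfMz (nth_map 0).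
Qed.

Lemma card_tors_le_ker (C D : zmodType) (h : {additive C -> D}) :
  finite_set (@tors C) -> finite_set (@tors D) ->
  (ntors C <= ntors D * #|` fset_set (@tors C `&` h @^-1` [set 0%R])|)%N.
Proof.
move=> fC fD; have fK : finite_set (@tors C `&` h @^-1` [set 0%R]).
  exact: sub_finite_set (@subIsetl _ _ _) fC.
apply: (proj2 (@fibers_subr_card _ _ h _ _ _ fD fK _ _)).
  by move=> _ [c Tc <-]; exact: is_torsion_raddf.
move=> c c' Tc Tc' hcc'; split; first exact: is_torsionB.
by rewrite /= raddfB hcc' subrr.
Qed.

Section TorsionOfImage.
Variables (A B C Af Bf Q : zmodType).
Variables (phi : {additive A -> B}) (g : {additive B -> C}).
Variables (pA : {additive A -> Af}) (pB : {additive B -> Bf}).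
Variables (phif : {additive Af -> Bf}) (q : {additive Bf -> Q}).
Hypotheses (exB : exact_at phi g) (hpA : free_quotient pA) (hpB : free_quotient pB).
Hypotheses (hphif : forall a, phif (pA a) = pB (phi a)) (hq : cokernel_of phif q).

Let lift (c : C) : B := xget 0 (g @^-1` [set c]).
(* Independent of the chosen preimage, as q o pB kills ker g = im phi. *)
Let F (c : C) : Q := q (pB (lift c)).

Lemma liftK c : range g c -> g (lift c) = c.
Proof. by move=> [b _ gb]; exact: (@xgetI _ _ (g @^-1` [set c]) b). Qed.

Lemma q_pB_phi a : q (pB (phi a)) = 0.
Proof. by rewrite -hphif; apply/hq.2; exists (pA a). Qed.

Lemma F_tors c : is_torsion c -> range g c -> is_torsion (F c).
Proof.
move=> [n [n0 cn]] gc; exists n; split=> //; rewrite /F -!raddfMn.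
have : g (lift c *+ n) = 0 by rewrite raddfMn liftK.
by move=> /exB[a <-]; exact: q_pB_phi.
Qed.

Lemma F_eq_diff c c' : range g c -> range g c' -> F c = F c' ->
  (g @` @tors B) (c - c').
Proof.
move=> gc gc' Fcc'.
have : q (pB (lift c - lift c')) = 0.
  by rewrite !raddfB; change (F c - F c' = 0); rewrite Fcc' subrr.
move=> /hq.2[x phifx]; have [a pAa] := hpA.1 x.
have Tb : is_torsion (lift c - lift c' - phi a).
  by apply/hpB.2; rewrite raddfB -hphif pAa phifx subrr.
exists (lift c - lift c' - phi a) => //.
have gphi : g (phi a) = 0 by apply/exB; exists a.
by rewrite !raddfB /= gphi subr0 !liftK.
Qed.

Lemma card_tors_range_le : finite_set (@tors B) -> finite_set (@tors Q) ->
  (#|` fset_set (@tors C `&` range g)| <= ntors Q * ntors B)%N.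
Proof.
move=> fB fQ.
have F_img : F @` (@tors C `&` range g) `<=` @tors Q.
  by move=> _ [c [Tc gc] <-]; exact: F_tors.
have F_fibers c c' : (@tors C `&` range g) c -> (@tors C `&` range g) c' ->
    F c = F c' -> (g @` @tors B) (c - c').
  by move=> [_ gc] [_ gc']; exact: F_eq_diff.
have [_ card_le] := @fibers_subr_card _ _ F _ _ _ fQ (finite_image g fB) F_img F_fibers.
by rewrite (leq_trans card_le) // leq_mul2l card_fset_set_image ?orbT.
Qed.

End TorsionOfImage.

Theorem lemma4p1
  (A B C D : zmodType)
  (phi : {additive A -> B}) (g : {additive B -> C}) (h : {additive C -> D})
  (fgA : fingen A) (fgB : fingen B) (fgC : fingen C) (fgD : fingen D)
  (exB : exact_at phi g) (exC : exact_at g h)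
  (Af Bf : zmodType) (pA : {additive A -> Af}) (pB : {additive B -> Bf})
  (hpA : free_quotient pA) (hpB : free_quotient pB)
  (phif : {additive Af -> Bf}) (hphif : forall a : A, phif (pA a) = pB (phi a))
  (Q : zmodType) (q : {additive Bf -> Q}) (hq : cokernel_of phif q) :
  (ntors C <= ntors Q * ntors B * ntors D)%N.
Proof.
have fgQ : fingen Q := fingen_surj hq.1 (fingen_surj hpB.1 fgB).
have ker_h : @tors C `&` h @^-1` [set 0] = @tors C `&` range g.
  apply/seteqP; split=> c [Tc kc]; split=> //.
    by have [b <-] := (exC c).1 kc; exists b.
  by apply/exC; case: kc => b _ <-; exists b.
apply: leq_trans (card_tors_le_ker h (fingen_finite_tors fgC) (fingen_finite_tors fgD)) _.
rewrite ker_h mulnC leq_mul2r.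
by apply/orP; right; apply: (card_tors_range_le exB hpA hpB hphif hq); exact: fingen_finite_tors.
Qed.
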